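(* Let $\mathbf G$ be a power-associative loop such that $\lvert\mathrm{Cen}(\mathcal G(\mathbf G))\rvert>1$. Then: (a) either $\mathbf G\cong(\mathbb Z,+)$, or all elements of $\mathbf G$ have finite order; (b) $\mathbf G\cong(\mathbb Z,+)$ if and only if $G$ is the union of countably infinitely many $\equiv_{\mathbf G}$-classes of cardinality $2$ and exactly one $\equiv_{\mathbf G}$-class of cardinality $3$.
   Context: A loop is called power-associative if every subloop generated by one element is a group; for such a loop, $x^n$ ($n\in\mathbb Z$) and the order $o(x)$ are defined within the cyclic group $\langle x\rangle$, and $e_{\mathbf G}$ denotes the identity. The power graph $\mathcal G(\mathbf G)$ is the simple graph with vertex set $G$ in which distinct $x,y$ are adjacent if $y=x^n$ or $x=y^n$ for some $n\in\mathbb Z$. The center of the power graph is $\mathrm{Cen}(\mathcal G(\mathbf G))=\{x\in G\mid x\text{ is adjacent to every }y\in G\setminus\{x\}\}$. For vertices $x,y$, write $x\equiv_{\mathbf G}y$ if $x$ and $y$ have the same closed neighborhood in $\mathcal G(\mathbf G)$. *)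

From Stdlib Require Import ZArith.

Section LoopDefs.
Variable G : Type.
Variable mul : G -> G -> G.
Variable e : G.

Definition is_loop : Prop :=
  (forall a, mul e a = a /\ mul a e = a) /\
  (forall a b, exists x, mul a x = b /\ forall x', mul a x' = b -> x' = x) /\
  (forall a b, exists y, mul y a = b /\ forall y', mul y' a = b -> y' = y).

Definition is_subloop (S : G -> Prop) : Prop :=
  S e /\
  (forall a b, S a -> S b -> S (mul a b)) /\
  (forall a b x, S a -> S b -> mul a x = b -> S x) /\
  (forall a b y, S a -> S b -> mul y a = b -> S y).

Definition gen1 (x y : G) : Prop :=
  forall S, is_subloop S -> S x -> S y.

(* Power-associative: each one-generated subloop is a group, i.e. the
   (restricted) loop multiplication is associative on it. *)
Definition power_assoc : Prop :=
  forall x a b c, gen1 x a -> gen1 x b -> gen1 x c ->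
    mul (mul a b) c = mul a (mul b c).

Fixpoint npow (x : G) (n : nat) : G :=
  match n with
  | O => e
  | S n' => mul (npow x n') x
  end.

(* Integer powers, as a relation: zpow_rel x n y <-> y = x^n.
   For n < 0, x^n is the inverse of x^(-n) (in the group <x>), i.e. the
   unique y with y * x^(-n) = e. *)
Definition zpow_rel (x : G) (n : Z) (y : G) : Prop :=
  match n with
  | Z0 => y = e
  | Zpos p => y = npow x (Pos.to_nat p)
  | Zneg p => mul y (npow x (Pos.to_nat p)) = e
  end.

Definition is_power (x y : G) : Prop := exists n : Z, zpow_rel x n y.

Definition pg_adj (x y : G) : Prop :=
  x <> y /\ (is_power x y \/ is_power y x).

Definition in_center (x : G) : Prop :=
  forall y, y <> x -> pg_adj x y.

Definition closed_nbhd (x z : G) : Prop := z = x \/ pg_adj x z.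

Definition same_nbhd (x y : G) : Prop :=
  forall z, closed_nbhd x z <-> closed_nbhd y z.

Definition finite_order (x : G) : Prop :=
  exists n : nat, (0 < n)%nat /\ npow x n = e.

Definition iso_Z : Prop :=
  exists f : G -> Z,
    (forall a b, f a = f b -> a = b) /\
    (forall z, exists a, f a = z) /\
    (forall a b, f (mul a b) = (f a + f b)%Z).

Definition card2 (P : G -> Prop) : Prop :=
  exists a b, a <> b /\ forall y, P y <-> (y = a \/ y = b).

Definition card3 (P : G -> Prop) : Prop :=
  exists a b c, a <> b /\ a <> c /\ b <> c /\
    forall y, P y <-> (y = a \/ y = b \/ y = c).

Definition class_structure : Prop :=
  (exists c, card3 (same_nbhd c) /\
     forall d, card3 (same_nbhd d) -> same_nbhd c d) /\
  (forall x, card2 (same_nbhd x) \/ card3 (same_nbhd x)) /\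
  (exists h : nat -> G,
     (forall n, card2 (same_nbhd (h n))) /\
     (forall n m, same_nbhd (h n) (h m) -> n = m) /\
     (forall x, card2 (same_nbhd x) -> exists n, same_nbhd x (h n))).

End LoopDefs.

(* A vertex [x <> e] of the center is comparable with every element under
   "is a power of".  If some element has infinite order then so does [x], and
   if [x = y ^ k] the exponent [k] must be comparable under divisibility with
   every integer, so [k = 1] or [k = -1]: [x] generates [G], which is then
   [(Z,+)].  There, [y == w] iff [|y| = |w|] or [|y|, |w| <= 1], giving one
   class [{0, 1, -1}] and the pairs [{n, -n}].  Conversely, under that class
   structure all generators of [<y>] lie in one class of size at most 3, so
   every order lies in [{1, 2, 3, 4, 6}]; for each possible order of [x] the
   centrality of [x] forces a class of the wrong size, so [G] is not torsion. *)

From Stdlib Require Import ZArith Lia Classical ClassicalEpsilon.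
Open Scope Z_scope.

(** * Divisibility classes in [Z] *)

Definition Zcomparable (a c : Z) : Prop := (a | c) \/ (c | a).

Definition same_Zcomparable (a b : Z) : Prop :=
  forall c, Zcomparable a c <-> Zcomparable b c.

Lemma Zcomparable_unit a c : Z.abs a <= 1 -> Zcomparable a c.
Proof.
  intro Ha. assert (a = 0 \/ a = 1 \/ a = -1) as [-> | [-> | ->]] by lia.
  - right. apply Z.divide_0_r.
  - left. apply Z.divide_1_l.
  - left. apply Z.divide_opp_l, Z.divide_1_l.
Qed.

Lemma Zcomparable_abs a b c : Z.abs a = Z.abs b -> Zcomparable a c -> Zcomparable b c.
Proof.
  intro Hab. assert (b = a \/ b = - a) as [-> | ->] by lia; auto.
  unfold Zcomparable. rewrite Z.divide_opp_l, Z.divide_opp_r. auto.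
Qed.

Lemma not_Zcomparable_abs_succ a : 2 <= Z.abs a -> ~ Zcomparable a (Z.abs a + 1).
Proof.
  intro Ha. destruct (Z.le_ge_cases 0 a);
    [rewrite Z.abs_eq in * by lia | rewrite Z.abs_neq in * by lia];
    intros [[k Hk]|[k Hk]];
    (assert (k <= -2 \/ k = -1 \/ k = 0 \/ k = 1 \/ 2 <= k) as [? | [-> | [-> | [-> | ?]]]] by lia;
     nia).
Qed.

Lemma Zcomparable_all a : (forall c, Zcomparable a c) -> Z.abs a <= 1.
Proof.
  intro Ha. apply Z.nlt_ge. intro Ha2.
  apply (not_Zcomparable_abs_succ a); [lia | apply Ha].
Qed.

Lemma same_Zcomparable_dvd a b :
  2 <= Z.abs a -> (a | b) -> same_Zcomparable a b -> Z.abs a = Z.abs b.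
Proof.
  intros Ha [k ->] Hab.
  assert (k = 1 \/ k = -1 \/ k = 0 \/ 2 <= Z.abs k) as [-> | [-> | [-> | Hk]]] by lia;
    [lia | lia | |].
  - exfalso. apply (not_Zcomparable_abs_succ a Ha). apply Hab, Zcomparable_unit. lia.
  - exfalso. set (m := Z.abs k + 1).
    assert (Zcomparable a (m * a)) as Hm by (left; exists m; auto).
    apply Hab in Hm as [[j Hj]|[j Hj]].
    + assert (m = j * k) by nia. subst m.
      assert (j = 0 \/ j = 1 \/ j = -1 \/ 2 <= Z.abs j) as [-> | [-> | [-> | ?]]] by lia; nia.
    + assert (k = j * m) by nia. subst m.
      assert (j = 0 \/ 1 <= Z.abs j) as [-> | ?] by lia; nia.
Qed.

Lemma same_Zcomparable_iff a b :
  same_Zcomparable a b <-> (Z.abs a <= 1 /\ Z.abs b <= 1) \/ Z.abs a = Z.abs b.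
Proof.
  split.
  - intro Hab.
    destruct (Z.le_gt_cases (Z.abs a) 1), (Z.le_gt_cases (Z.abs b) 1); [now left | exfalso.. | right].
    + apply (not_Zcomparable_abs_succ b); [lia|]. apply Hab, Zcomparable_unit; auto.
    + apply (not_Zcomparable_abs_succ a); [lia|]. apply Hab, Zcomparable_unit; auto.
    + assert (Zcomparable a b) as [Hd|Hd] by (apply Hab; left; apply Z.divide_refl).
      * apply same_Zcomparable_dvd; auto; lia.
      * symmetry. apply same_Zcomparable_dvd; auto; [lia|]. intro c. symmetry. apply Hab.
  - intros [[Ha Hb]|Hab] c; split; intro; auto using Zcomparable_unit.
    + eapply Zcomparable_abs; eauto.
    + eapply Zcomparable_abs; [symmetry|]; eauto.
Qed.

(** * Integer powers in a power-associative loop *)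

Section Loop.
Variable G : Type.
Variable mul : G -> G -> G.
Variable e : G.
Hypothesis HL : is_loop G mul e.
Hypothesis HPA : power_assoc G mul e.

Notation npow := (npow G mul e).
Notation same_nbhd := (same_nbhd G mul e).
Notation in_center := (in_center G mul e).
Notation gen1 := (gen1 G mul e).

Lemma mul_e_l a : mul e a = a. Proof. apply (proj1 HL). Qed.
Lemma mul_e_r a : mul a e = a. Proof. apply (proj1 HL). Qed.

Lemma mul_cancel_l a x y : mul a x = mul a y -> x = y.
Proof.
  intro H. destruct (proj1 (proj2 HL) a (mul a x)) as [z [_ Hz]].
  rewrite (Hz x eq_refl). symmetry. apply Hz. auto.
Qed.

Lemma mul_cancel_r a x y : mul x a = mul y a -> x = y.
Proof.
  intro H. destruct (proj2 (proj2 HL) a (mul x a)) as [z [_ Hz]].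
  rewrite (Hz x eq_refl). symmetry. apply Hz. auto.
Qed.

Definition inv (a : G) : G :=
  proj1_sig (constructive_indefinite_description (fun y => mul y a = e)
    (match proj2 (proj2 HL) a e with ex_intro _ y (conj H _) => ex_intro _ y H end)).

Lemma mul_inv_l a : mul (inv a) a = e.
Proof. unfold inv. destruct constructive_indefinite_description. auto. Qed.

Lemma inv_unique a y : mul y a = e -> y = inv a.
Proof. intro H. apply (mul_cancel_r a). rewrite mul_inv_l. auto. Qed.

Lemma inv_e : inv e = e.
Proof. symmetry. apply inv_unique, mul_e_l. Qed.

Lemma gen1_subloop x : is_subloop G mul e (gen1 x).
Proof.
  split; [|split; [|split]].
  - intros S HS _. apply HS.
  - intros a b Ha Hb S HS Hx. apply HS; [apply Ha | apply Hb]; auto.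
  - intros a b y Ha Hb H S HS Hx. apply (proj1 (proj2 (proj2 HS)) a b); [apply Ha|apply Hb|]; auto.
  - intros a b y Ha Hb H S HS Hx. apply (proj2 (proj2 (proj2 HS)) a b); [apply Ha|apply Hb|]; auto.
Qed.

Lemma gen1_self x : gen1 x x. Proof. intros S _ H; auto. Qed.
Lemma gen1_e x : gen1 x e. Proof. apply (gen1_subloop x). Qed.
Lemma gen1_mul x a b : gen1 x a -> gen1 x b -> gen1 x (mul a b).
Proof. apply (gen1_subloop x). Qed.
Lemma gen1_inv x a : gen1 x a -> gen1 x (inv a).
Proof.
  intro H. apply (proj2 (proj2 (proj2 (gen1_subloop x))) a e); auto using gen1_e, mul_inv_l.
Qed.

Lemma mul_inv_r x a : gen1 x a -> mul a (inv a) = e.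
Proof.
  intro H. apply (mul_cancel_l (inv a)). rewrite <- (HPA x); auto using gen1_inv.
  rewrite mul_inv_l, mul_e_l, mul_e_r. auto.
Qed.

Lemma gen1_npow x n : gen1 x (npow x n).
Proof. induction n; simpl; auto using gen1_e, gen1_mul, gen1_self. Qed.

Lemma npow_comm x n : mul (npow x n) x = mul x (npow x n).
Proof.
  induction n; simpl; [now rewrite mul_e_l, mul_e_r|].
  rewrite <- (HPA x), <- IHn; auto using gen1_npow, gen1_self.
Qed.

Definition zpow x (z : Z) : G :=
  if 0 <=? z then npow x (Z.to_nat z) else inv (npow x (Z.to_nat (- z))).

Lemma gen1_zpow x z : gen1 x (zpow x z).
Proof. unfold zpow. destruct (0 <=? z); auto using gen1_npow, gen1_inv. Qed.

Lemma zpow_0 x : zpow x 0 = e. Proof. reflexivity. Qed.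
Lemma zpow_1 x : zpow x 1 = x. Proof. apply mul_e_l. Qed.

Lemma zpow_succ x z : zpow x (z + 1) = mul (zpow x z) x.
Proof.
  unfold zpow. destruct (Z.leb_spec 0 z), (Z.leb_spec 0 (z + 1)); try lia.
  - now replace (Z.to_nat (z + 1)) with (S (Z.to_nat z)) by lia.
  - replace z with (-1) by lia. simpl. rewrite mul_e_l. symmetry. apply mul_inv_l.
  - replace (Z.to_nat (- z)) with (S (Z.to_nat (- (z + 1)))) by lia.
    cbn [npow]. symmetry. apply inv_unique.
    rewrite (HPA x), <- npow_comm; auto using gen1_inv, gen1_mul, gen1_self, gen1_npow.
    apply mul_inv_l.
Qed.

Lemma zpow_pred x z : zpow x (z - 1) = mul (zpow x z) (inv x).
Proof.
  replace z with (z - 1 + 1) at 2 by lia.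
  rewrite zpow_succ, (HPA x), (mul_inv_r x), mul_e_r;
    auto using gen1_inv, gen1_self, gen1_zpow.
Qed.

Lemma zpow_add x a b : zpow x (a + b) = mul (zpow x a) (zpow x b).
Proof.
  induction b using Z.peano_ind.
  - now rewrite Z.add_0_r, zpow_0, mul_e_r.
  - rewrite <- !Z.add_1_r, Z.add_assoc, !zpow_succ, IHb.
    apply (HPA x); auto using gen1_zpow, gen1_self.
  - rewrite <- !Z.sub_1_r. replace (a + (b - 1)) with (a + b - 1) by lia.
    rewrite !zpow_pred, IHb. apply (HPA x); auto using gen1_zpow, gen1_self, gen1_inv.
Qed.

Lemma zpow_opp x a : zpow x (- a) = inv (zpow x a).
Proof. apply inv_unique. rewrite <- zpow_add. now replace (- a + a) with 0 by lia. Qed.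

Lemma zpow_mul x a b : zpow (zpow x a) b = zpow x (a * b).
Proof.
  induction b using Z.peano_ind.
  - now rewrite Z.mul_0_r.
  - rewrite <- !Z.add_1_r, zpow_succ, IHb, <- zpow_add. f_equal. lia.
  - rewrite <- !Z.sub_1_r, zpow_pred, IHb, <- zpow_opp, <- zpow_add. f_equal. lia.
Qed.

Lemma zpow_e k : zpow e k = e.
Proof. now rewrite <- (zpow_0 e), zpow_mul. Qed.

Lemma zpow_mulC x a b : zpow (zpow x a) b = zpow (zpow x b) a.
Proof. now rewrite !zpow_mul, Z.mul_comm. Qed.

Lemma zpow_period x m a q : zpow x m = e -> zpow x (a + m * q) = zpow x a.
Proof. intro H. now rewrite zpow_add, <- zpow_mul, H, zpow_e, mul_e_r. Qed.

Lemma zpow_eq_sub x a b : zpow x a = zpow x b -> zpow x (b - a) = e.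
Proof.
  intro H. apply (mul_cancel_l (zpow x a)). rewrite <- zpow_add, mul_e_r, H. f_equal. lia.
Qed.

Lemma zpow_rel_iff x n y : zpow_rel G mul e x n y <-> y = zpow x n.
Proof.
  destruct n as [|p|p]; unfold zpow; simpl; try tauto.
  split; intro H; [now apply inv_unique | subst; apply mul_inv_l].
Qed.

Definition is_zpow x y := exists k, y = zpow x k.

Lemma is_power_iff x y : is_power G mul e x y <-> is_zpow x y.
Proof. split; intros [k H]; exists k; apply zpow_rel_iff; auto. Qed.

Lemma is_zpow_refl x : is_zpow x x. Proof. exists 1. now rewrite zpow_1. Qed.
Lemma is_zpow_e x : is_zpow x e. Proof. now exists 0. Qed.

Lemma is_zpow_trans x y z : is_zpow x y -> is_zpow y z -> is_zpow x z.
Proof. intros [a ->] [b ->]. exists (a * b). apply zpow_mul. Qed.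

Lemma is_zpow_zpow x k : is_zpow x (zpow x k). Proof. now exists k. Qed.

Definition has_finite_order x := exists m, 0 < m /\ zpow x m = e.

Lemma finite_order_iff x : finite_order G mul e x <-> has_finite_order x.
Proof.
  split.
  - intros [n [Hn H]]. exists (Z.of_nat n). split; [lia|].
    unfold zpow. destruct (Z.leb_spec 0 (Z.of_nat n)); [|lia]. now rewrite Nat2Z.id.
  - intros [m [Hm H]]. exists (Z.to_nat m). split; [lia|].
    unfold zpow in H. destruct (Z.leb_spec 0 m); [auto | lia].
Qed.

Lemma has_finite_order_of x k : k <> 0 -> zpow x k = e -> has_finite_order x.
Proof.
  intros Hk H. destruct (Z.ltb_spec 0 k); [now exists k|].
  exists (- k). split; [lia|]. now rewrite zpow_opp, H, inv_e.
Qed.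

Lemma has_finite_order_zpow x k : has_finite_order x -> has_finite_order (zpow x k).
Proof.
  intros [m [Hm H]]. exists m. split; auto. now rewrite zpow_mulC, H, zpow_e.
Qed.

Lemma zpow_inj x a b : ~ has_finite_order x -> zpow x a = zpow x b -> a = b.
Proof.
  intros Hx H. apply zpow_eq_sub in H. destruct (Z.eq_dec (b - a) 0); [lia|].
  exfalso. eapply Hx, has_finite_order_of; eauto.
Qed.

Lemma is_zpow_zpow_iff x a b :
  ~ has_finite_order x -> is_zpow (zpow x a) (zpow x b) <-> (a | b).
Proof.
  intro Hx. split.
  - intros [k Hk]. rewrite zpow_mul in Hk. apply zpow_inj in Hk; auto.
    exists k. lia.
  - intros [k ->]. exists k. rewrite zpow_mul. f_equal. lia.
Qed.

Definition comparable x y := is_zpow x y \/ is_zpow y x.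

Lemma closed_nbhd_iff y w : closed_nbhd G mul e y w <-> comparable y w.
Proof.
  unfold closed_nbhd, pg_adj, comparable. rewrite !is_power_iff. split.
  - intros [->|[_ H]]; auto using is_zpow_refl.
  - intro H. destruct (classic (w = y)); auto.
Qed.

Lemma same_nbhd_iff y w : same_nbhd y w <-> forall z, comparable y z <-> comparable w z.
Proof.
  split; intros H z; specialize (H z); rewrite ?closed_nbhd_iff in *; auto.
Qed.

Lemma central_comparable x : in_center x -> forall y, comparable x y.
Proof.
  intros Hx y. destruct (classic (y = x)) as [->|Hy].
  - left. apply is_zpow_refl.
  - destruct (Hx y Hy) as [_ H]. unfold comparable. now rewrite <- !is_power_iff.
Qed.

Lemma in_center_of c : (forall w, comparable c w) -> in_center c.
Proof.
  intros H y Hy. split; auto. rewrite !is_power_iff. apply H.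
Qed.

(** * Central elements and infinite order *)

Lemma central_torsion x :
  in_center x -> x <> e -> has_finite_order x -> forall y, has_finite_order y.
Proof.
  intros Hx Hxe Hfx y.
  destruct (central_comparable x Hx y) as [[k ->]|[k Hk]]; [now apply has_finite_order_zpow|].
  destruct Hfx as [n [Hn Hxn]].
  apply (has_finite_order_of y (k * n)).
  - assert (k <> 0) by (intros ->; auto). nia.
  - now rewrite <- zpow_mul, <- Hk.
Qed.

(* If [x = y ^ k] is central and [y] has infinite order, then [k] is comparable with
   every integer, hence [k = 1] or [k = -1]. *)
Lemma central_infinite_generates x :
  in_center x -> ~ has_finite_order x -> forall y, is_zpow x y.
Proof.
  intros Hx Hfx y.
  destruct (central_comparable x Hx y) as [Hy|[k Hk]]; auto.
  assert (Hfy : ~ has_finite_order y).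
  { intros Hfy. apply Hfx. rewrite Hk. now apply has_finite_order_zpow. }
  assert (Hk1 : Z.abs k <= 1).
  { apply Zcomparable_all. intro c. unfold Zcomparable.
    rewrite <- !(is_zpow_zpow_iff y), <- Hk by auto.
    destruct (central_comparable x Hx (zpow y c)); auto. }
  assert (k = 0 \/ k = 1 \/ k = -1) as [-> | [-> | ->]] by lia.
  - exfalso. apply Hfx. rewrite Hk. exists 1. split; [lia|]. apply zpow_e.
  - rewrite Hk, zpow_1. apply is_zpow_refl.
  - exists (-1). now rewrite Hk, zpow_mul, <- (zpow_1 y) at 1.
Qed.

Lemma iso_Z_of_generator x :
  ~ has_finite_order x -> (forall y, is_zpow x y) -> iso_Z G mul.
Proof.
  intros Hx Hgen.
  set (f := fun y => proj1_sig (constructive_indefinite_description _ (Hgen y))).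
  assert (Hf : forall y, y = zpow x (f y)).
  { intro y. unfold f. now destruct constructive_indefinite_description. }
  exists f. split; [|split].
  - intros a b H. now rewrite (Hf a), (Hf b), H.
  - intro z. exists (zpow x z). apply (zpow_inj x); auto.
  - intros a b. apply (zpow_inj x); auto. now rewrite <- Hf, zpow_add, <- !Hf.
Qed.

Lemma central_dichotomy x :
  in_center x -> x <> e -> iso_Z G mul \/ forall y, has_finite_order y.
Proof.
  intros Hx Hxe. destruct (classic (has_finite_order x)) as [Hfx|Hfx].
  - right. now apply (central_torsion x).
  - left. apply (iso_Z_of_generator x Hfx). now apply central_infinite_generates.
Qed.

(** * The classes of [(Z,+)] *)

Lemma card2_no_three (P : G -> Prop) a b c : card2 G P -> P a -> P b -> P c ->
  a <> b -> a <> c -> b <> c -> False.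
Proof.
  intros [p [q [_ H]]] Ha Hb Hc. apply H in Ha, Hb, Hc.
  destruct Ha, Hb, Hc; subst; tauto.
Qed.

Lemma card3_no_four (P : G -> Prop) a b c d : card3 G P -> P a -> P b -> P c -> P d ->
  a <> b -> a <> c -> a <> d -> b <> c -> b <> d -> c <> d -> False.
Proof.
  intros [p [q [r [_ [_ [_ H]]]]]] Ha Hb Hc Hd. apply H in Ha, Hb, Hc, Hd.
  destruct Ha as [?|[?|?]], Hb as [?|[?|?]], Hc as [?|[?|?]], Hd as [?|[?|?]]; subst; tauto.
Qed.

Section IsoZ.
Variable f : G -> Z.
Hypothesis f_inj : forall a b, f a = f b -> a = b.
Hypothesis f_surj : forall z, exists a, f a = z.
Hypothesis f_mul : forall a b, f (mul a b) = f a + f b.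

Let g z := proj1_sig (constructive_indefinite_description _ (f_surj z)).

Let f_g z : f (g z) = z.
Proof. unfold g. now destruct constructive_indefinite_description. Qed.

Let g_neq a b : a <> b -> g a <> g b.
Proof. intros H E. apply H. now rewrite <- (f_g a), <- (f_g b), E. Qed.

Let f_neq a b : f a <> f b -> a <> b.
Proof. now intros H ->. Qed.

Let f_e : f e = 0.
Proof. pose proof (f_mul e e). rewrite mul_e_l in H. lia. Qed.

Let f_zpow y k : f (zpow y k) = k * f y.
Proof.
  assert (Hn : forall n, f (npow y n) = Z.of_nat n * f y).
  { induction n; [apply f_e|]. cbn [npow]. rewrite f_mul, IHn, Nat2Z.inj_succ. lia. }
  assert (Hi : forall c, f (inv c) = - f c).
  { intro c. pose proof (f_mul (inv c) c). rewrite mul_inv_l, f_e in H. lia. }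
  unfold zpow. destruct (Z.leb_spec 0 k).
  - rewrite Hn. f_equal. lia.
  - rewrite Hi, Hn, Z2Nat.id by lia. lia.
Qed.

Let comparable_f y w : comparable y w <-> Zcomparable (f y) (f w).
Proof.
  assert (H : forall y w, is_zpow y w <-> (f y | f w)).
  { split.
    - intros [k ->]. exists k. apply f_zpow.
    - intros [k Hk]. exists k. apply f_inj. now rewrite f_zpow. }
  unfold comparable, Zcomparable. now rewrite !H.
Qed.

Let same_nbhd_f y w : same_nbhd y w <->
  (Z.abs (f y) <= 1 /\ Z.abs (f w) <= 1) \/ Z.abs (f y) = Z.abs (f w).
Proof.
  rewrite same_nbhd_iff, <- same_Zcomparable_iff. unfold same_Zcomparable. split.
  - intros H c. specialize (H (g c)). now rewrite !comparable_f, f_g in H.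
  - intros H z. rewrite !comparable_f. apply H.
Qed.

Let card3_small x : Z.abs (f x) <= 1 -> card3 G (same_nbhd x).
Proof.
  intro Hx. exists e, (g 1), (g (-1)).
  split; [apply f_neq; rewrite f_e, f_g; lia|].
  split; [apply f_neq; rewrite f_e, f_g; lia|].
  split; [apply g_neq; lia|].
  intro y. rewrite same_nbhd_f. split.
  - intro H. assert (f y = f e \/ f y = f (g 1) \/ f y = f (g (-1))) as [E|[E|E]]
      by (rewrite f_e, !f_g; lia); apply f_inj in E; auto.
  - intros [-> | [-> | ->]]; rewrite ?f_e, ?f_g; lia.
Qed.

Let card2_big x : 2 <= Z.abs (f x) -> card2 G (same_nbhd x).
Proof.
  intro Hx. exists x, (g (- f x)). split; [apply f_neq; rewrite f_g; lia|].
  intro y. rewrite same_nbhd_f. split.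
  - intro H. assert (f y = f x \/ f y = f (g (- f x))) as [E|E]
      by (rewrite f_g; lia); apply f_inj in E; auto.
  - intros [-> | ->]; rewrite ?f_g; lia.
Qed.

Lemma class_structure_of_iso_Z : class_structure G mul e.
Proof.
  split; [|split].
  - exists e. split; [apply card3_small; rewrite f_e; lia|].
    intros d [a [b [c [Hab [Hac [Hbc Hd]]]]]]. apply same_nbhd_f. rewrite f_e.
    assert (Ha : same_nbhd d a) by (apply Hd; auto).
    assert (Hb : same_nbhd d b) by (apply Hd; auto).
    assert (Hc : same_nbhd d c) by (apply Hd; auto).
    rewrite same_nbhd_f in Ha, Hb, Hc.
    assert (f a <> f b /\ f a <> f c /\ f b <> f c) by (repeat split; intro E; apply f_inj in E; auto).
    lia.
  - intro x. destruct (Z.le_gt_cases (Z.abs (f x)) 1).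
    + right. now apply card3_small.
    + left. apply card2_big. lia.
  - exists (fun n => g (Z.of_nat n + 2)). split; [|split].
    + intro n. apply card2_big. rewrite f_g. lia.
    + intros n m H. apply same_nbhd_f in H. rewrite !f_g in H. lia.
    + intros x Hx. destruct (Z.le_gt_cases (Z.abs (f x)) 1).
      * exfalso. apply (card2_no_three _ e (g 1) (g (-1)) Hx);
          try (apply same_nbhd_f; rewrite ?f_e, ?f_g; lia);
          try (apply f_neq; rewrite f_e, f_g; lia).
        apply g_neq. lia.
      * exists (Z.to_nat (Z.abs (f x) - 2)). apply same_nbhd_f. rewrite f_g. lia.
Qed.

End IsoZ.

(** * Torsion loops with the class structure *)

Definition is_order y m := 0 < m /\ zpow y m = e /\ forall j, 0 < j < m -> zpow y j <> e.

Lemma order_exists y : has_finite_order y -> exists m, is_order y m.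
Proof.
  intros [m0 [Hm0 H0]]. apply NNPP. intro Hn.
  assert (Hall : forall n : nat, forall j, 0 < j <= Z.of_nat n -> zpow y j <> e).
  { induction n; intros j Hj; [lia|].
    destruct (Z.le_gt_cases j (Z.of_nat n)); [apply IHn; lia|].
    intro E. apply Hn. exists j. repeat split; [lia | auto |].
    intros i Hi. apply IHn. lia. }
  apply (Hall (Z.to_nat m0) m0); auto. lia.
Qed.

Lemma zpow_mod_order y m k : is_order y m -> zpow y k = zpow y (k mod m).
Proof.
  intros [Hm [He _]]. rewrite (Z.div_mod k m) at 1 by lia.
  rewrite Z.add_comm. now apply zpow_period.
Qed.

Lemma zpow_neq_order y m a b : is_order y m -> 0 <= a < b -> b < m -> zpow y a <> zpow y b.
Proof. intros [_ [_ H]] Hab Hb E. apply zpow_eq_sub in E. apply (H (b - a)); auto. lia. Qed.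

Lemma zpow_eq_order y m a b : is_order y m -> zpow y a = zpow y b -> a mod m = b mod m.
Proof.
  intros Hy E. rewrite (zpow_mod_order y m a), (zpow_mod_order y m b) in E by auto.
  pose proof Hy as [Hm _].
  pose proof (Z.mod_pos_bound a m Hm). pose proof (Z.mod_pos_bound b m Hm).
  destruct (Z.lt_total (a mod m) (b mod m)) as [Hl|[Hl|Hl]]; auto; exfalso.
  - now apply (zpow_neq_order y m (a mod m) (b mod m)).
  - now apply (zpow_neq_order y m (b mod m) (a mod m)).
Qed.

Lemma is_zpow_order y m w : is_order y m -> is_zpow y w -> exists r, 0 <= r < m /\ w = zpow y r.
Proof.
  intros Hy [k ->]. exists (k mod m). pose proof Hy as [Hm _].
  split; [now apply Z.mod_pos_bound | now apply zpow_mod_order].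
Qed.

Lemma zpow_gcd_e y a b : zpow y a = e -> zpow y b = e -> zpow y (Z.gcd a b) = e.
Proof.
  intros Ha Hb. destruct (Z.gcd_bezout a b _ eq_refl) as [u [v <-]].
  rewrite zpow_add, !(Z.mul_comm _ a), !(Z.mul_comm _ b), <- !zpow_mul, Ha, Hb, !zpow_e.
  apply mul_e_l.
Qed.

(* Whichever of [x], [w] is a power of the other is killed by both exponents,
   hence by their gcd. *)
Lemma central_coprime x w n d :
  in_center x -> zpow x n = e -> zpow w d = e -> Z.gcd n d = 1 -> x = e \/ w = e.
Proof.
  intros Hx Hn Hd Hnd.
  destruct (central_comparable x Hx w) as [[k ->]|[k ->]].
  - right. rewrite <- (zpow_1 (zpow x k)), <- Hnd.
    apply zpow_gcd_e; auto. now rewrite zpow_mulC, Hn, zpow_e.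
  - left. rewrite <- (zpow_1 (zpow w k)), <- Hnd.
    apply zpow_gcd_e; auto. now rewrite zpow_mulC, Hd, zpow_e.
Qed.

Lemma same_nbhd_refl a : same_nbhd a a.
Proof. intro; tauto. Qed.
Lemma same_nbhd_sym a b : same_nbhd a b -> same_nbhd b a.
Proof. intros H z. specialize (H z). tauto. Qed.
Lemma same_nbhd_trans a b c : same_nbhd a b -> same_nbhd b c -> same_nbhd a c.
Proof. intros H1 H2 z. specialize (H1 z). specialize (H2 z). tauto. Qed.

Lemma same_nbhd_mutual y z : is_zpow y z -> is_zpow z y -> same_nbhd y z.
Proof.
  intros Hyz Hzy. apply same_nbhd_iff. intro w. unfold comparable.
  split; intros [H|H]; eauto using is_zpow_trans.
Qed.

Lemma is_zpow_zpow_mod y m a b u q : zpow y m = e ->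
  a * u = b + m * q -> is_zpow (zpow y a) (zpow y b).
Proof. intros He Hu. exists u. now rewrite zpow_mul, Hu, zpow_period. Qed.

Lemma same_nbhd_zpow y m a b u v q r : zpow y m = e ->
  a * u = b + m * q -> b * v = a + m * r -> same_nbhd (zpow y a) (zpow y b).
Proof. intros. apply same_nbhd_mutual; eapply is_zpow_zpow_mod; eauto. Qed.

Lemma same_nbhd_central c : in_center c -> same_nbhd e c.
Proof.
  intros Hc. apply same_nbhd_iff. intro w. split; intros _.
  - now apply central_comparable.
  - right. apply is_zpow_e.
Qed.

Lemma closed_nbhd_of_same a z : same_nbhd a z -> comparable a z.
Proof. intro H. apply closed_nbhd_iff, H. now left. Qed.

Section ClassStructure.
Hypothesis CS : class_structure G mul e.

Lemma class_no_four a b c d : same_nbhd a b -> same_nbhd a c -> same_nbhd a d ->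
  a <> b -> a <> c -> a <> d -> b <> c -> b <> d -> c <> d -> False.
Proof.
  intros. destruct (proj1 (proj2 CS) a) as [K2|K3].
  - apply (card2_no_three _ a b c K2); auto using same_nbhd_refl.
  - apply (card3_no_four _ a b c d K3); auto using same_nbhd_refl.
Qed.

Lemma class_no_four_zpow y m a b c d : is_order y m -> 0 <= a < b -> b < c -> c < d < m ->
  same_nbhd (zpow y a) (zpow y b) -> same_nbhd (zpow y a) (zpow y c) ->
  same_nbhd (zpow y a) (zpow y d) -> False.
Proof.
  intros Hy **. apply (class_no_four (zpow y a) (zpow y b) (zpow y c) (zpow y d));
    auto; apply (zpow_neq_order y m); auto; lia.
Qed.

Lemma class_nontrivial a : exists b, b <> a /\ same_nbhd a b.
Proof.
  assert (H : exists p q, p <> q /\ same_nbhd a p /\ same_nbhd a q).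
  { destruct (proj1 (proj2 CS) a) as [[p [q [Hpq H]]]|[p [q [r [Hpq [_ [_ H]]]]]]];
      exists p, q; repeat split; auto; apply H; auto. }
  destruct H as [p [q [Hpq [Hp Hq]]]].
  destruct (classic (p = a)) as [->|]; [now exists q | now exists p].
Qed.

(* The generators of [<y>] all lie in the class of [y], so [y] has at most
   three of them; we exhibit four when the order is not 1, 2, 3, 4 or 6. *)
Lemma order_cases y m : is_order y m -> m = 1 \/ m = 2 \/ m = 3 \/ m = 4 \/ m = 6.
Proof.
  intro Hy. pose proof Hy as [Hm [He _]].
  assert (m <= 4 \/ m = 6 \/ (exists t, 2 <= t /\ m = 2 * t + 1) \/
     (exists t, 2 <= t /\ m = 4 * t) \/ (exists t, 2 <= t /\ m = 4 * t + 2))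
    as [?|[?|[[t [Ht ->]]|[[t [Ht ->]]|[t [Ht ->]]]]]] by
    (assert (m <= 4 \/ m = 6 \/ 5 <= m /\ m <> 6) as [?|[?|[? ?]]] by lia; auto;
     right; right; pose proof (Z.div_mod m 4 ltac:(lia)); pose proof (Z.mod_pos_bound m 4 ltac:(lia));
     assert (m mod 4 = 0 \/ m mod 4 = 1 \/ m mod 4 = 2 \/ m mod 4 = 3) as [E|[E|[E|E]]] by lia;
     [right; left; exists (m / 4) | left; exists (2 * (m / 4)) |
      right; right; exists (m / 4) | left; exists (2 * (m / 4) + 1)]; lia);
    [lia | lia | exfalso..].
  - apply (class_no_four_zpow y (2*t+1) 1 2 (2*t-1) (2*t)); auto; try lia.
    + apply (same_nbhd_zpow y (2*t+1) 1 2 2 (t+1) 0 1); auto; ring.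
    + apply (same_nbhd_zpow y (2*t+1) 1 (2*t-1) (2*t-1) t 0 (t-1)); auto; ring.
    + apply (same_nbhd_zpow y (2*t+1) 1 (2*t) (2*t) (2*t) 0 (2*t-1)); auto; ring.
  - apply (class_no_four_zpow y (4*t) 1 (2*t-1) (2*t+1) (4*t-1)); auto; try lia.
    + apply (same_nbhd_zpow y (4*t) 1 (2*t-1) (2*t-1) (2*t-1) 0 (t-1)); auto; ring.
    + apply (same_nbhd_zpow y (4*t) 1 (2*t+1) (2*t+1) (2*t+1) 0 (t+1)); auto; ring.
    + apply (same_nbhd_zpow y (4*t) 1 (4*t-1) (4*t-1) (4*t-1) 0 (4*t-2)); auto; ring.
  - apply (class_no_four_zpow y (4*t+2) 2 4 (4*t-2) (4*t)); auto; try lia.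
    + apply (same_nbhd_zpow y (4*t+2) 2 4 2 (t+1) 0 1); auto; ring.
    + apply (same_nbhd_zpow y (4*t+2) 2 (4*t-2) (-2) (-(t+1)) (-1) (-t)); auto; ring.
    + apply (same_nbhd_zpow y (4*t+2) 2 (4*t) (-1) (-1) (-1) (-1)); auto; ring.
Qed.

Variable x : G.
Hypothesis x_central : in_center x.
Hypothesis x_neq_e : x <> e.
Hypothesis torsion : forall y, has_finite_order y.

Lemma same_nbhd_e_x : same_nbhd e (zpow x 1).
Proof. rewrite zpow_1. now apply same_nbhd_central. Qed.

Lemma not_order_four : ~ is_order x 4.
Proof.
  intro Hx. pose proof Hx as [_ [He _]].
  assert (Hx2 : in_center (zpow x 2)).
  { apply in_center_of. intro w.
    destruct (central_comparable x x_central w) as [Hw|Hw].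
    - destruct (is_zpow_order x 4 w Hx Hw) as [r [Hr ->]].
      assert (r = 0 \/ r = 1 \/ r = 2 \/ r = 3) as [-> | [-> | [-> | ->]]] by lia.
      + left. apply is_zpow_e.
      + right. apply (is_zpow_zpow_mod x 4 1 2 2 0); auto.
      + left. apply is_zpow_refl.
      + right. apply (is_zpow_zpow_mod x 4 3 2 2 1); auto.
    - right. eapply is_zpow_trans; [apply Hw | apply is_zpow_zpow]. }
  apply (class_no_four_zpow x 4 0 1 2 3); auto; try lia.
  - apply same_nbhd_e_x.
  - now apply same_nbhd_central.
  - eapply same_nbhd_trans; [apply same_nbhd_e_x|].
    apply (same_nbhd_zpow x 4 1 3 3 3 0 2); auto.
Qed.

(* [x ^ 3] and [x ^ 2] are incomparable, but everything is comparable with [x]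
   or [x ^ 2]; so [x ^ 3] has no partner in its class. *)
Lemma not_order_six : ~ is_order x 6.
Proof.
  intro Hx. pose proof Hx as [_ [He _]].
  destruct (class_nontrivial (zpow x 3)) as [z [Hz Hs]].
  assert (Hz2 : ~ comparable z (zpow x 2)).
  { intro H. rewrite same_nbhd_iff in Hs. apply Hs in H.
    destruct H as [[j Hj]|[j Hj]]; rewrite zpow_mul in Hj;
      apply (zpow_eq_order x 6) in Hj; auto; Z.div_mod_to_equations; lia. }
  apply Hz2. destruct (central_comparable x x_central z) as [Hw|Hw].
  - destruct (is_zpow_order x 6 z Hx Hw) as [r [Hr ->]].
    assert (r = 0 \/ r = 1 \/ r = 2 \/ r = 3 \/ r = 4 \/ r = 5)
      as [-> | [-> | [-> | [-> | [-> | ->]]]]] by lia.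
    + right. apply is_zpow_e.
    + left. apply (is_zpow_zpow_mod x 6 1 2 2 0); auto.
    + left. apply is_zpow_refl.
    + contradiction.
    + right. apply (is_zpow_zpow_mod x 6 2 4 2 0); auto.
    + left. apply (is_zpow_zpow_mod x 6 5 2 4 3); auto.
  - left. eapply is_zpow_trans; [apply Hw | apply is_zpow_zpow].
Qed.

Lemma order_three_generates : is_order x 3 -> forall q, is_zpow x q.
Proof.
  intros Hx q. pose proof Hx as [_ [Hx3 _]].
  destruct (central_comparable x x_central q) as [Hq|[k Hk]]; auto.
  destruct (order_exists q (torsion q)) as [m Hq]. pose proof Hq as [Hm [Hqm Hqmin]].
  assert (Hcop : forall w d, zpow w d = e -> Z.gcd 3 d = 1 -> w = e).
  { intros w d Hw Hd. now destruct (central_coprime x w 3 d x_central Hx3 Hw Hd). }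
  destruct (order_cases q m Hq) as [-> | [-> | [-> | [-> | ->]]]];
    try (rewrite (Hcop q _ Hqm eq_refl); apply is_zpow_e).
  - rewrite (zpow_mod_order q 3 k Hq) in Hk. pose proof (Z.mod_pos_bound k 3 Hm).
    assert (k mod 3 = 0 \/ k mod 3 = 1 \/ k mod 3 = 2) as [E | [E | E]] by lia;
      rewrite E in Hk.
    + contradiction.
    + rewrite Hk, zpow_1. apply is_zpow_refl.
    + exists 2. rewrite Hk, zpow_mul, <- (zpow_1 q) at 1.
      symmetry. now apply (zpow_period q 3 1 1).
  - exfalso. apply (Hqmin 3); [lia|]. apply (Hcop _ 2); [|reflexivity].
    now rewrite zpow_mul.
Qed.

Lemma not_order_three : ~ is_order x 3.
Proof.
  intro Hx. pose proof Hx as [_ [Hx3 _]].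
  assert (Hclass : forall q, same_nbhd e q).
  { intro q. destruct (is_zpow_order x 3 q Hx (order_three_generates Hx q)) as [r [Hr ->]].
    assert (r = 0 \/ r = 1 \/ r = 2) as [-> | [-> | ->]] by lia.
    - apply same_nbhd_refl.
    - apply same_nbhd_e_x.
    - eapply same_nbhd_trans; [apply same_nbhd_e_x|].
      apply (same_nbhd_zpow x 3 1 2 2 2 0 1); auto. }
  destruct CS as [_ [_ [h [Hh _]]]].
  apply (card2_no_three _ (zpow x 0) (zpow x 1) (zpow x 2) (Hh O));
    try (eapply same_nbhd_trans; [apply same_nbhd_sym, Hclass | apply Hclass]);
    apply (zpow_neq_order x 3); auto; lia.
Qed.

Lemma order_two_square : is_order x 2 ->
  forall y, y <> e -> y <> x -> is_order y 4 /\ zpow y 2 = x.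
Proof.
  intros Hx y Hye Hyx. pose proof Hx as [_ [Hx2 _]].
  destruct (central_comparable x x_central y) as [Hy|[k Hk]].
  { exfalso. destruct (is_zpow_order x 2 y Hx Hy) as [r [Hr ->]].
    assert (r = 0 \/ r = 1) as [-> | ->] by lia; [auto | now rewrite zpow_1 in Hyx]. }
  destruct (order_exists y (torsion y)) as [m Hy]. pose proof Hy as [Hm [Hym Hymin]].
  assert (Hcop : forall w d, zpow w d = e -> Z.gcd 2 d = 1 -> w = e).
  { intros w d Hw Hd. now destruct (central_coprime x w 2 d x_central Hx2 Hw Hd). }
  rewrite (zpow_mod_order y m k Hy) in Hk. pose proof (Z.mod_pos_bound k m Hm).
  destruct (order_cases y m Hy) as [-> | [-> | [-> | [-> | ->]]]].
  - exfalso. replace (k mod 1) with 0 in Hk by lia. contradiction.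
  - exfalso. assert (k mod 2 = 0 \/ k mod 2 = 1) as [E | E] by lia; rewrite E in Hk.
    + contradiction.
    + rewrite zpow_1 in Hk. congruence.
  - exfalso. exact (Hye (Hcop y 3 Hym eq_refl)).
  - split; auto.
    assert (k mod 4 = 0 \/ k mod 4 = 1 \/ k mod 4 = 2 \/ k mod 4 = 3)
      as [E | [E | [E | E]]] by lia; rewrite E in Hk; auto; exfalso.
    + contradiction.
    + rewrite zpow_1 in Hk. congruence.
    + apply Hyx. rewrite <- (zpow_1 y), <- (zpow_period y 4 1 2), <- (zpow_1 x) by auto.
      rewrite <- (zpow_period x 2 1 1), Hk, zpow_mul by auto. reflexivity.
  - exfalso. apply (Hymin 2); [lia|]. apply (Hcop _ 3); [|reflexivity].
    now rewrite zpow_mul.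
Qed.

Lemma order_two_class_e : is_order x 2 -> forall c, same_nbhd e c -> c = e \/ c = x.
Proof.
  intros Hx c Hc. apply NNPP. intro Hn.
  destruct (order_two_square Hx c) as [Hc4 Hc2]; [tauto.. |].
  pose proof Hc4 as [_ [He _]].
  assert (Hc1 : same_nbhd (zpow c 0) (zpow c 1)) by now rewrite zpow_1.
  apply (class_no_four_zpow c 4 0 1 2 3); auto; try lia.
  - rewrite Hc2. now apply same_nbhd_central.
  - apply (same_nbhd_trans _ (zpow c 1)); auto.
    apply (same_nbhd_zpow c 4 1 3 3 3 0 2); auto.
Qed.

Lemma order_two_class_pair : is_order x 2 ->
  forall a, exists u v, forall z, same_nbhd a z -> z = u \/ z = v.
Proof.
  intros Hx a. destruct (classic (same_nbhd e a)) as [Ha | Ha].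
  { exists e, x. intros z Hz. apply (order_two_class_e Hx). eauto using same_nbhd_trans. }
  exists a, (zpow a 3). intros z Hz.
  assert (Hnot : forall w, same_nbhd a w -> w <> e /\ w <> x).
  { intros w Hw. split; intros ->; apply Ha.
    - now apply same_nbhd_sym.
    - eapply same_nbhd_trans; [apply (same_nbhd_central x x_central) | now apply same_nbhd_sym]. }
  destruct (Hnot a (same_nbhd_refl a)) as [Hae Hax], (Hnot z Hz) as [Hze Hzx].
  destruct (order_two_square Hx a Hae Hax) as [Ha4 Ha2].
  destruct (order_two_square Hx z Hze Hzx) as [Hz4 Hz2].
  destruct (closed_nbhd_of_same a z Hz) as [Haz | Hza].
  - destruct (is_zpow_order a 4 z Ha4 Haz) as [r [Hr ->]].
    assert (r = 0 \/ r = 1 \/ r = 2 \/ r = 3) as [-> | [-> | [-> | ->]]] by lia; auto.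
    + now contradiction Hze.
    + left. apply zpow_1.
    + now contradiction Hzx.
  - destruct (is_zpow_order z 4 a Hz4 Hza) as [r [Hr Ea]]. pose proof Hz4 as [_ [He _]].
    assert (r = 0 \/ r = 1 \/ r = 2 \/ r = 3) as [-> | [-> | [-> | ->]]] by lia.
    + now contradiction Hae.
    + left. now rewrite Ea, zpow_1.
    + now rewrite <- Hz2 in Hax.
    + right. rewrite Ea, zpow_mul, <- (zpow_1 z) at 1.
      symmetry. now apply (zpow_period z 4 1 2).
Qed.

Lemma not_order_two : ~ is_order x 2.
Proof.
  intro Hx. destruct CS as [[c [[p [q [r [Hpq [Hpr [Hqr Hc]]]]]] _]] _].
  destruct (order_two_class_pair Hx c) as [u [v Huv]].
  assert (Hp : p = u \/ p = v) by (apply Huv, Hc; auto).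
  assert (Hq : q = u \/ q = v) by (apply Huv, Hc; auto).
  assert (Hr : r = u \/ r = v) by (apply Huv, Hc; auto).
  destruct Hp, Hq, Hr; subst; tauto.
Qed.

Lemma torsion_central_false : False.
Proof.
  destruct (order_exists x (torsion x)) as [n Hx].
  destruct (order_cases x n Hx) as [-> | [-> | [-> | [-> | ->]]]].
  - apply x_neq_e. now rewrite <- (zpow_1 x), (zpow_mod_order x 1 1 Hx).
  - now apply not_order_two.
  - now apply not_order_three.
  - now apply not_order_four.
  - now apply not_order_six.
Qed.

End ClassStructure.
End Loop.

Theorem mainTheorem1 (G : Type) (mul : G -> G -> G) (e : G)
  (HL : is_loop G mul e) (HPA : power_assoc G mul e)
  (HC : exists x1 x2, x1 <> x2 /\ in_center G mul e x1 /\ in_center G mul e x2) :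
  (iso_Z G mul \/ forall x, finite_order G mul e x) /\
  (iso_Z G mul <-> class_structure G mul e).
Proof.
  assert (Hx : exists x, in_center G mul e x /\ x <> e).
  { destruct HC as [x1 [x2 [H12 [H1 H2]]]].
    destruct (classic (x1 = e)) as [->|]; [exists x2 | exists x1]; auto. }
  destruct Hx as [x [Hxc Hxe]].
  pose proof (central_dichotomy G mul e HL HPA x Hxc Hxe) as Hdich.
  split; [|split].
  - destruct Hdich as [|Htors]; auto. right. intro y. now apply (finite_order_iff G mul e HL).
  - intros [f [f_inj [f_surj f_mul]]]. now apply (class_structure_of_iso_Z G mul e HL f).
  - intro CS. destruct Hdich as [|Htors]; auto.
    destruct (torsion_central_false G mul e HL HPA CS x Hxc Hxe Htors).
Qed.
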